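(* Let $(\mathfrak{Q},\&,e)$ be a non-trivial unital quantale and let $\alpha$ be a $\mathfrak{Q}$-preorder on a $\mathfrak{Q}$-subset $(X,|\cdot|)$. (1) If $|\cdot|'\colon X\to\mathfrak{Q}$ is another map with $|x|\le|x|'\le\alpha(x,x)$ for all $x\in X$, then $\alpha$ is also a $\mathfrak{Q}$-preorder on the $\mathfrak{Q}$-subset $(X,|\cdot|')$. (2) If $\mathfrak{Q}$ is integral, then $\alpha(x,x)=|x|$ for every $x\in X$.
   Context: A unital quantale $(\mathfrak{Q},\&,e)$ is a complete lattice with an associative multiplication $\&$ with unit $e$, preserving arbitrary joins in each variable; non-trivial means $\bot<e$; integral means $e=\top$. Implications: $p\& q\le r\iff p\le r/ q\iff q\le p\backslash r$. A $\mathfrak{Q}$-subset is a set $X$ with a map $|\cdot|\colon X\to\mathfrak{Q}$. A $\mathfrak{Q}$-preorder on $(X,|\cdot|)$ is a map $\alpha\colon X\times X\to\mathfrak{Q}$ such that for all $x,y,z\in X$: (divisibility) $(\alpha(x,y)/|x|)\&|x|=\alpha(x,y)=|y|\&(|y|\backslash\alpha(x,y))$; (reflexivity) $|x|\le\alpha(x,x)$; (transitivity) $(\alpha(y,z)/|y|)\&\alpha(x,y)=\alpha(y,z)\&(|y|\backslash\alpha(x,y))\le\alpha(x,z)$. *)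

Record quantale := Quantale {
  qcar :> Type;
  qle : qcar -> qcar -> Prop;
  qle_refl : forall a, qle a a;
  qle_trans : forall a b c, qle a b -> qle b c -> qle a c;
  qle_antisym : forall a b, qle a b -> qle b a -> a = b;
  qsup : (qcar -> Prop) -> qcar;
  qsup_ub : forall (S : qcar -> Prop) a, S a -> qle a (qsup S);
  qsup_least : forall (S : qcar -> Prop) b,
      (forall a, S a -> qle a b) -> qle (qsup S) b;
  qmul : qcar -> qcar -> qcar;
  qunit : qcar;
  qmulA : forall a b c, qmul a (qmul b c) = qmul (qmul a b) c;
  qmul1l : forall a, qmul qunit a = a;
  qmul1r : forall a, qmul a qunit = a;
  qmul_supr : forall a (S : qcar -> Prop),
      qmul a (qsup S) = qsup (fun y => exists x, S x /\ y = qmul a x);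
  qmul_supl : forall a (S : qcar -> Prop),
      qmul (qsup S) a = qsup (fun y => exists x, S x /\ y = qmul x a)
}.

Arguments qle {q} _ _.
Arguments qsup {q} _.
Arguments qmul {q} _ _.
Arguments qunit {q}.

Notation "a <=q b" := (qle a b) (at level 70).
Notation "a & b" := (qmul a b) (at level 40, left associativity).

Definition qbot {Q : quantale} : Q := qsup (fun _ => False).
Definition qtop {Q : quantale} : Q := qsup (fun _ => True).

(** Implications: p & q <= r <-> p <= r / q <-> q <= p \ r. *)
Definition qrdiv {Q : quantale} (r q : Q) : Q := qsup (fun p => p & q <=q r).
Definition qldiv {Q : quantale} (p r : Q) : Q := qsup (fun q => p & q <=q r).

Definition nontrivial (Q : quantale) : Prop :=
  (@qbot Q) <=q qunit /\ (@qbot Q) <> qunit.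

Definition integral (Q : quantale) : Prop := @qunit Q = qtop.

Definition Qpreorder {Q : quantale} {X : Type} (nm : X -> Q)
    (alpha : X -> X -> Q) : Prop :=
  (forall x y, (qrdiv (alpha x y) (nm x)) & nm x = alpha x y /\
               alpha x y = nm y & (qldiv (nm y) (alpha x y))) /\
  (forall x, nm x <=q alpha x x) /\
  (forall x y z,
      (qrdiv (alpha y z) (nm y)) & alpha x y
        = alpha y z & (qldiv (nm y) (alpha x y)) /\
      (qrdiv (alpha y z) (nm y)) & alpha x y <=q alpha x z).


(** Enlarging the norm from [|x|] to some [|x|'] below [alpha(x,x)] does not
    change the residuals [alpha(x,y) / |x|] and [|y| \ alpha(x,y)]: they can
    only shrink, and transitivity through [alpha(x,x)] (resp. [alpha(y,y)])
    shows they do not.  Divisibility and transitivity for [|.|'] are then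
    those for [|.|].  In an integral quantale [alpha(x,x) = |x| & (|x| \ ...)]
    is at most [|x|]. *)

Section QuantaleFacts.

Context {Q : quantale}.
Implicit Types a b c p q r : Q.

Lemma qsup_comparable_pair {a b} : a <=q b -> qsup (fun t => t = a \/ t = b) = b.
Proof.
  intros Hab. apply qle_antisym.
  - apply qsup_least. intros t [-> | ->]; [exact Hab | apply qle_refl].
  - apply qsup_ub. now right.
Qed.

Lemma qmul_monol a b c : a <=q b -> a & c <=q b & c.
Proof.
  intros Hab. rewrite <- (qsup_comparable_pair Hab), qmul_supl.
  apply qsup_ub. exists a. split; auto.
Qed.

Lemma qmul_monor a b c : a <=q b -> c & a <=q c & b.
Proof.
  intros Hab. rewrite <- (qsup_comparable_pair Hab), qmul_supr.
  apply qsup_ub. exists a. split; auto.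
Qed.

Lemma qrdivP p q r : p & q <=q r <-> p <=q qrdiv r q.
Proof.
  split; intros H.
  - apply qsup_ub. exact H.
  - apply qle_trans with (qrdiv r q & q); [now apply qmul_monol|].
    unfold qrdiv. rewrite qmul_supl. apply qsup_least.
    intros t [s [Hs ->]]. exact Hs.
Qed.

Lemma qldivP p q r : p & q <=q r <-> q <=q qldiv p r.
Proof.
  split; intros H.
  - apply qsup_ub. exact H.
  - apply qle_trans with (p & qldiv p r); [now apply qmul_monor|].
    unfold qldiv. rewrite qmul_supr. apply qsup_least.
    intros t [s [Hs ->]]. exact Hs.
Qed.

Lemma qrdiv_mull r q : qrdiv r q & q <=q r.
Proof. apply qrdivP, qle_refl. Qed.

Lemma qldiv_mulr p r : p & qldiv p r <=q r.
Proof. apply qldivP, qle_refl. Qed.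

Lemma qrdiv_enlarge {p p' r : Q} :
  p <=q p' -> qrdiv r p & p' <=q r -> qrdiv r p' = qrdiv r p.
Proof.
  intros Hp Hr. apply qle_antisym.
  - apply qrdivP. apply qle_trans with (qrdiv r p' & p');
      [now apply qmul_monor | apply qrdiv_mull].
  - now apply qrdivP.
Qed.

Lemma qldiv_enlarge {p p' r : Q} :
  p <=q p' -> p' & qldiv p r <=q r -> qldiv p' r = qldiv p r.
Proof.
  intros Hp Hr. apply qle_antisym.
  - apply qldivP. apply qle_trans with (p' & qldiv p' r);
      [now apply qmul_monol | apply qldiv_mulr].
  - now apply qldivP.
Qed.

Lemma qrdiv_divisible_enlarge {p p' r : Q} :
  qrdiv r p & p = r -> p <=q p' -> qrdiv r p & p' <=q r ->
  qrdiv r p' & p' = r.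
Proof.
  intros Hdiv Hp Hr. rewrite (qrdiv_enlarge Hp Hr).
  apply qle_antisym; [exact Hr|].
  apply qle_trans with (qrdiv r p & p);
    [rewrite Hdiv; apply qle_refl | now apply qmul_monor].
Qed.

Lemma qldiv_divisible_enlarge {p p' r : Q} :
  r = p & qldiv p r -> p <=q p' -> p' & qldiv p r <=q r ->
  r = p' & qldiv p' r.
Proof.
  intros Hdiv Hp Hr. rewrite (qldiv_enlarge Hp Hr).
  apply qle_antisym; [|exact Hr].
  apply qle_trans with (p & qldiv p r);
    [rewrite <- Hdiv; apply qle_refl | now apply qmul_monol].
Qed.

Lemma integral_qmul_ler p q : integral Q -> p & q <=q p.
Proof.
  intros Hint. apply qle_trans with (p & qunit).
  - apply qmul_monor. rewrite Hint. now apply qsup_ub.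
  - rewrite qmul1r. apply qle_refl.
Qed.

End QuantaleFacts.

Section QpreorderFacts.

Context {Q : quantale} {X : Type} {nm : X -> Q} {alpha : X -> X -> Q}.
Hypothesis alpha_pre : Qpreorder nm alpha.

Lemma Qpreorder_rdiv_mul_refl x y :
  qrdiv (alpha x y) (nm x) & alpha x x <=q alpha x y.
Proof. apply (proj2 (proj2 (proj2 alpha_pre) x x y)). Qed.

Lemma Qpreorder_refl_mul_ldiv x y :
  alpha y y & qldiv (nm y) (alpha x y) <=q alpha x y.
Proof.
  destruct (proj2 (proj2 alpha_pre) x y y) as [Hcomm Hle].
  rewrite <- Hcomm. exact Hle.
Qed.

Lemma Qpreorder_enlarge_norm (nm' : X -> Q) :
  (forall x, nm x <=q nm' x /\ nm' x <=q alpha x x) -> Qpreorder nm' alpha.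
Proof.
  intros Hnm.
  destruct alpha_pre as [Hdiv [_ Htrans]].
  assert (Hlo : forall x, nm x <=q nm' x) by apply Hnm.
  assert (Hhi : forall x, nm' x <=q alpha x x) by apply Hnm.
  assert (Hrdiv_le : forall x y, qrdiv (alpha x y) (nm x) & nm' x <=q alpha x y).
  { intros x y. eapply qle_trans;
      [apply qmul_monor, Hhi | apply Qpreorder_rdiv_mul_refl]. }
  assert (Hldiv_le : forall x y, nm' y & qldiv (nm y) (alpha x y) <=q alpha x y).
  { intros x y. eapply qle_trans;
      [apply qmul_monol, Hhi | apply Qpreorder_refl_mul_ldiv]. }
  split; [|split].
  - intros x y. split.
    + apply (qrdiv_divisible_enlarge (proj1 (Hdiv x y)) (Hlo x) (Hrdiv_le x y)).
    + apply (qldiv_divisible_enlarge (proj2 (Hdiv x y)) (Hlo y) (Hldiv_le x y)).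
  - exact Hhi.
  - intros x y z.
    rewrite (qrdiv_enlarge (Hlo y) (Hrdiv_le y z)),
            (qldiv_enlarge (Hlo y) (Hldiv_le x y)).
    apply Htrans.
Qed.

Lemma Qpreorder_refl_eq_norm : integral Q -> forall x, alpha x x = nm x.
Proof.
  intros Hint x. destruct alpha_pre as [Hdiv [Hrefl _]].
  apply qle_antisym; [|apply Hrefl].
  rewrite (proj2 (Hdiv x x)). now apply integral_qmul_ler.
Qed.

End QpreorderFacts.

Theorem proposition3p3 (Q : quantale) (X : Type) (nm : X -> Q)
    (alpha : X -> X -> Q) :
  nontrivial Q -> Qpreorder nm alpha ->
  (forall nm' : X -> Q,
      (forall x, nm x <=q nm' x /\ nm' x <=q alpha x x) ->
      Qpreorder nm' alpha) /\
  (integral Q -> forall x, alpha x x = nm x).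
Proof.
  intros _ Hpre. split.
  - exact (Qpreorder_enlarge_norm Hpre).
  - exact (Qpreorder_refl_eq_norm Hpre).
Qed.
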